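(* Let $q=p^e$ with $p$ prime, and let $\mathcal P$ be a projective plane of order $q$ which is $((\infty),[\infty])$-transitive with $\Gamma((\infty),[\infty])$ elementary abelian. Suppose $T\in\mathbb F_q[X,Y,Z]$ is a PTR polynomial obtained from coordinatising $\mathcal P$ optimally, so that the resulting additive loop is field addition, and let $M_2(X,Y)$ be the reduced polynomial with $M_2(x,y)=T(x,y,0)$. Then for every $a\in\mathbb F_q\setminus\{0,1\}$ the polynomial $f_a(X)=M_2(X,a)-X$ is a complete mapping on $\mathbb F_q$.
   Context: A polynomial $f\in\mathbb F_q[X]$ is a complete mapping on $\mathbb F_q$ if both $f(X)$ and $f(X)+X$ are permutation polynomials of $\mathbb F_q$. Coordinatisation: for a projective plane of order $q$, choose a quadrangle $O,X,Y,I$, label $O=(0,0)$, $X=(0)$, $Y=(\infty)$, $I=(1,1)$, $[\infty]=\overline{XY}$, $[0]=\overline{OY}$, $[0,0]=\overline{OX}$; $(0,1)=\overline{XI}\cap[0]$, $(1,0)=\overline{YI}\cap[0,0]$, $(1)=\overline{(1,0)(0,1)}\cap[\infty]$; other points of $[0]$ are labelled $(0,a)$ arbitrarily, then $(a,0)=\overline{(0,a)(1)}\cap[0,0]$, $(a)=\overline{(0,a)(1,0)}\cap[\infty]$, $(a,b)=\overline{(a,0)Y}\cap\overline{(0,b)X}$, $[m,k]=\overline{(m)(0,k)}$. The PTR polynomial is the reduced $T$ with $T(m,x,y)=k$ iff $(x,y)\in[m,k]$; $x\oplus y=T(1,x,y)$, $x\odot y=T(x,y,0)$; $T$ is linear if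 $T(x,y,z)=(x\odot y)\oplus z$; a PTR polynomial satisfies $T(x,1,0)=x$ and, for $a\ne c$, $T(x,a,b)=T(x,c,d)$ has a unique solution $x$. $(P,L)$-transitivity: $\Gamma(P,L)$ (central collineations with centre $P$ and axis $L$) is transitive on the points $\ne P$, not on $L$, of each line through $P$. Optimal coordinatisation (the paper's convention): when $\mathcal P$ is $((\infty),[\infty])$-transitive, the coordinatisation is chosen with $Y$ and $\overline{XY}$ the centre and axis, so that the PTR is linear with $\oplus$ associative and isomorphic to $\Gamma((\infty),[\infty])$, and when this group is elementary abelian the labelling is chosen so that $\oplus$ is addition in $\mathbb F_q$. *)

From mathcomp Require Import all_boot all_order all_algebra.
Set Implicit Arguments. Unset Strict Implicit. Unset Printing Implicit Defensive.
Import GRing.Theory.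
Local Open Scope ring_scope.

(* A ternary function T on a finite field F (every function F^3 -> F is a
   unique reduced polynomial, so we identify reduced polynomials with functions).
   Convention of the paper: T m x y = k  iff  the affine point (x,y) lies on the
   line [m,k].  The incidence structure attached to T has affine points (x,y),
   points at infinity (m) and (infty), lines [m,k], vertical lines [c] and
   [infty].  [is_PTR T] says that this structure is a projective plane and that
   T is exactly the ternary function obtained from coordinatising it with the
   labelling O=(0,0), I=(1,1), (0,1), (1,0), (1) of the context. *)
Definition is_PTR (F : fieldType) (T : F -> F -> F -> F) : Prop :=
  ((* (a,k) lies on [0,k] = X(0,k) *)
      (forall x y, T 0 x y = y) /\
      (* (0,k) lies on [m,k] = (m)(0,k) *)
      (forall m k, T m 0 k = k) /\
      (* (x,0) lies on [1,x] = (1)(0,x) *)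
      (forall x, T 1 x 0 = x) /\
      (* (1,0) lies on [m,m] = (m)(0,m) *)
      (forall m, T m 1 0 = m) /\
      (* a line [m,k] meets a vertical line [x] in exactly one affine point *)
      (forall m x k, exists! y, T m x y = k) /\
      (* two non-parallel lines [m,k], [m',k'] meet in exactly one affine point *)
      (forall m m' k k', m <> m' ->
          exists! xy : F * F, T m xy.1 xy.2 = k /\ T m' xy.1 xy.2 = k') /\
      (* two affine points with distinct abscissae lie on exactly one line [m,k] *)
      (forall a b c d, a <> c -> exists! m, T m a b = T m c d)).

Definition ptr_add (F : fieldType) (T : F -> F -> F -> F) (x y : F) : F := T 1 x y.
Definition ptr_mul (F : fieldType) (T : F -> F -> F -> F) (x y : F) : F := T x y 0.

Definition PTR_linear (F : fieldType) (T : F -> F -> F -> F) : Prop :=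
  forall x y z, T x y z = ptr_add T (ptr_mul T x y) z.

Definition is_permutation (F : finFieldType) (f : F -> F) : Prop := bijective f.

Definition complete_mapping (F : finFieldType) (f : F -> F) : Prop :=
  is_permutation f /\ is_permutation (fun x => f x + x).

From mathcomp Require Import all_boot all_order all_algebra.
Import GRing.Theory.
Local Open Scope ring_scope.

(* Once the addition of the PTR is field addition, linearity reads
   T(m,x,k) = m (.) x + k, so the affine points (a,b) and (c,d), a <> c, lie
   on [m,k] iff m (.) a - m (.) c = d - b.  Uniqueness of the line joining two
   such points thus makes m |-> m (.) a - m (.) c injective.  Since m (.) 1 = m
   and m (.) 0 = 0, the choices c = 1 and c = 0 give f_a and f_a + X, and
   injective maps of a finite field are permutations. *)

Section LinearPTR.

Variables (F : fieldType) (T : F -> F -> F -> F).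
Hypothesis T_linear : PTR_linear T.
Hypothesis ptr_addE : forall x y, ptr_add T x y = x + y.
Hypothesis unique_joining_line :
  forall a b c d, a <> c -> exists! m, T m a b = T m c d.

Lemma ptrE m x k : T m x k = ptr_mul T m x + k.
Proof. by rewrite T_linear ptr_addE. Qed.

Lemma ptr_mul_subr_inj a c :
  a != c -> injective (fun m => ptr_mul T m a - ptr_mul T m c).
Proof.
move=> /eqP neq_ac m m' /= eq_mm'.
pose d := ptr_mul T m a - ptr_mul T m c.
have [m0 [_ m0_unique]] := unique_joining_line a 0 c d neq_ac.
have on_line n : ptr_mul T n a - ptr_mul T n c = d -> T n a 0 = T n c d.
  by move=> <-; rewrite !ptrE addr0 addrC subrK.
rewrite -(m0_unique m (on_line m erefl)).
by rewrite -(m0_unique m' (on_line m' (esym eq_mm'))).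
Qed.

End LinearPTR.

Theorem lemma5p3 (F : finFieldType) (T : F -> F -> F -> F) :
  is_PTR T ->
  PTR_linear T ->
  (forall x y, ptr_add T x y = x + y) ->
  forall a : F, a != 0 -> a != 1 ->
  complete_mapping (fun x => ptr_mul T x a - x).
Proof.
move=> [_ [T_m0k [_ [T_m10 [_ [_ joining_line]]]]]] T_lin T_add a a_neq0 a_neq1.
have mul0 m : ptr_mul T m 0 = 0 := T_m0k m 0.
have mul1 m : ptr_mul T m 1 = m := T_m10 m.
have inj c := @ptr_mul_subr_inj F T T_lin T_add joining_line a c.
split; apply: injF_bij => x y /=.
- by move=> eq_xy; apply: (inj 1 a_neq1); rewrite /= !mul1.
- by rewrite !subrK => eq_xy; apply: (inj 0 a_neq0); rewrite /= !mul0 eq_xy.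
Qed.
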